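(* Let $X$ be a topological space, $\sigma$ a winning strategy for Player I in the open-open game on $X$, and $\mathcal P$ a family of non-empty open subsets of $X$ closed under $\sigma$. Then for every non-empty open set $V\subseteq X$ there exists $W\in\mathcal P$ such that every $U\in\mathcal P$ with $U\subseteq W$ satisfies $U\cap V\neq\emptyset$.
   Context: Open-open game on $X$: at inning $n$ Player I chooses a non-empty open $A_n\subseteq X$, then Player II chooses a non-empty open $B_n\subseteq A_n$; Player I wins if $\bigcup_nB_n$ is dense in $X$. A strategy for Player I is a function $\sigma$ assigning a non-empty open set to each finite (possibly empty) sequence of non-empty open sets; it is winning if Player I wins every play in which $A_0=\sigma(\emptyset)$ and $A_{n+1}=\sigma(B_0,\dots,B_n)$. $\mathcal P$ is closed under $\sigma$ if $\sigma(\emptyset)\in\mathcal P$ and $\sigma(B_0,\dots,B_n)\in\mathcal P$ whenever $B_0,\dots,B_n\in\mathcal P$. *)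

From mathcomp Require Import all_boot all_order all_algebra.
From mathcomp Require Import all_classical all_reals all_analysis.
Set Implicit Arguments. Unset Strict Implicit. Unset Printing Implicit Defensive.
Local Open Scope classical_set_scope.

Definition neopen (X : topologicalType) (A : set X) : Prop := open A /\ A !=set0.

Fixpoint all_in (T : Type) (P : set T) (l : seq T) : Prop :=
  if l is x :: l' then P x /\ all_in P l' else True.

Definition strategy (X : topologicalType) := seq (set X) -> set X.

Definition prefix (X : topologicalType) (B : nat -> set X) (n : nat) : seq (set X) :=
  [seq B i | i <- iota 0 n].

(* B is a play of Player II against s: A_n = s (B_0,...,B_{n-1}), B_n ⊆ A_n *)
Definition play_against (X : topologicalType) (s : strategy X) (B : nat -> set X) : Prop :=
  forall n, neopen (B n) /\ B n `<=` s (prefix B n).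

Definition is_strategy (X : topologicalType) (s : strategy X) : Prop :=
  forall bs : seq (set X), all_in (@neopen X) bs -> neopen (s bs).

Definition winning_strategy (X : topologicalType) (s : strategy X) : Prop :=
  is_strategy s /\
  forall B : nat -> set X, play_against s B -> dense (\bigcup_n B n).


Definition closed_under (X : topologicalType) (P : set (set X)) (s : strategy X) : Prop :=
  P (s [::]) /\ forall bs : seq (set X), bs <> [::] -> all_in P bs -> P (s bs).

From Pilot Require Import Defs.
From mathcomp Require Import all_boot all_order all_algebra.
From mathcomp Require Import all_classical all_reals all_analysis.
Local Open Scope classical_set_scope.
Set Implicit Arguments. Unset Strict Implicit. Unset Printing Implicit Defensive.

(* If no W in P works, every W in P contains some U in P missing V.  Let
   Player II answer each move of sigma by such a U: since P is closed under
   sigma, all moves stay in P, so this is a legal play, and sigma wins it;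
   but then the union of II's moves is dense and must meet V, although each
   of them misses V. *)

Lemma all_in_rcons (T : Type) (Q : set T) (l : seq T) (x : T) :
  all_in Q l -> Q x -> all_in Q (rcons l x).
Proof. by elim: l => [|y l IH] /= => [_ Qx|[Qy Ql] Qx]; split => //; apply: IH. Qed.

Lemma closed_under_all_in (X : topologicalType) (P : set (set X)) (s : strategy X)
    (bs : seq (set X)) :
  closed_under P s -> all_in P bs -> P (s bs).
Proof. by case: bs => [|b bs] [Pnil Pcons] // Pbs; apply: Pcons. Qed.

Section ResponsePlay.
Variables (X : topologicalType) (s : strategy X) (f : set X -> set X).

Fixpoint response_history (n : nat) : seq (set X) :=
  if n is n'.+1 then rcons (response_history n') (f (s (response_history n')))
  else [::].

Definition response_play (n : nat) : set X := f (s (response_history n)).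

Lemma prefix_response_play (n : nat) : Defs.prefix response_play n = response_history n.
Proof.
elim: n => [//|n IH]; move: IH.
by rewrite /Defs.prefix -addn1 iotaD map_cat /= => ->; rewrite addn1 add0n cats1.
Qed.

Variable P : set (set X).
Hypotheses (Ps : closed_under P s) (Pf : forall W, P W -> P (f W)).

Lemma response_history_in (n : nat) : all_in P (response_history n).
Proof.
elim: n => [//|n IH] /=; apply: all_in_rcons => //.
exact: Pf (closed_under_all_in Ps IH).
Qed.

Lemma response_move_in (n : nat) : P (s (response_history n)).
Proof. exact: closed_under_all_in Ps (response_history_in n). Qed.

Lemma response_play_against :
  (forall W, P W -> neopen (f W) /\ f W `<=` W) -> play_against s response_play.
Proof.
move=> fW n; rewrite prefix_response_play.
exact: fW (response_move_in n).
Qed.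

End ResponsePlay.

Theorem lemma6 (X : topologicalType) (s : strategy X) (P : set (set X)) :
  winning_strategy s ->
  (forall A, P A -> neopen A) ->
  closed_under P s ->
  forall V : set X, neopen V ->
  exists W, P W /\ forall U, P U -> U `<=` W -> U `&` V !=set0.
Proof.
move=> [_ win] Pneopen Ps V [oV V0]; apply: contrapT => noW.
have shrink W : exists U, P W -> [/\ P U, U `<=` W & ~ (U `&` V !=set0)].
  have [PW|nPW] := pselect (P W); last by exists W.
  have /existsNP[U /not_implyP[PU /not_implyP[UW UV]]] :
      ~ (forall U, P U -> U `<=` W -> U `&` V !=set0) by move=> h; apply: noW; exists W.
  by exists U.
have [f hf] := choice shrink.
have Pf W : P W -> P (f W) by case/hf.
have play : play_against s (response_play s f).
  by apply: (response_play_against Ps Pf) => W /hf[PfW fW _]; split; first exact: Pneopen.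
have [x [Vx [n _ Bx]]] := win _ play V V0 oV.
have [_ _ nBV] := hf _ (response_move_in Ps Pf n).
by apply: nBV; exists x.
Qed.
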